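(* Let $\pi\colon(\mathcal{G},R)\to(\mathcal{H},R)$ be a surjection of right Hopf algebroids over $R$ with left Hopf kernel $B$, with $\mathcal{G}_\triangleleft$ flat over $R$, and suppose that $\mathcal{G}B^+=\ker\pi$, or equivalently that $B\subseteq\mathcal{G}$ is a Hopf-Galois extension. Then $\overline{\mathcal{G}}=\mathcal{G}/\mathcal{G}B^+\cong\mathcal{H}$ as left $\mathcal{G}$-module corings.
   Context: $\Bbbk$ a commutative ring, $R$ a $\Bbbk$-algebra. Left bialgebroid $(\mathcal{G},R,s,t,\Delta,\varepsilon)$: $\Bbbk$-algebra, algebra map $s$ and anti-map $t\colon R\to\mathcal{G}$ with commuting images, $r\triangleright g\triangleleft r'=s(r)t(r')g$, $r\blacktriangleright g\blacktriangleleft r'=gt(r)s(r')$, coassociative counital $R$-bimodule map $\Delta\colon\mathcal{G}\to\mathcal{G}_\triangleleft\otimes_R{}_\triangleright\mathcal{G}$, $g\mapsto g_{(1)}\otimes g_{(2)}$, valued in the Takeuchi subspace and multiplicative, counit with $\varepsilon(1)=1$, $\varepsilon(gg')=\varepsilon(g\blacktriangleleft\varepsilon(g'))=\varepsilon(\varepsilon(g')\blacktriangleright g)$. Right Hopf: $\mathcal{G}_\blacktriangleleft\otimes_R{}_\triangleright\mathcal{G}\to\mathcal{G}_\triangleleft\otimes_R{}_\triangleright\mathcal{G}$, $g\otimes g'\mapsto g_{(1)}g'\otimes g_{(2)}$ bijective. A surjection of bialgebroids over $R$ is a surjective algebra map $\pi$ intertwining $s,t,\Delta,\varepsilon$. Left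 Hopf kernel $B=\{g:g_{(1)}\otimes_R\pi(g_{(2)})=g\otimes_R1\}$, $B^+=B\cap\ker\varepsilon$. $B\subseteq\mathcal{G}$ is Hopf-Galois if $\mathcal{G}\otimes_B\mathcal{G}\to\mathcal{G}\otimes_R\mathcal{H}$, $g\otimes g'\mapsto g_{(1)}g'\otimes\pi(g_{(2)})$ is bijective. $\overline{\mathcal{G}}=\mathcal{G}/\mathcal{G}B^+$, with projection $\wp$, is a left $\mathcal{G}$-module $R$-coring via $g\cdot\wp(g')=\wp(gg')$, $\Delta(\wp(g))=\wp(g_{(1)})\otimes_R\wp(g_{(2)})$, $\varepsilon(\wp(g))=\varepsilon(g)$ and $R$-bimodule structure induced by $\triangleright,\triangleleft$; $\mathcal{H}$ is a left $\mathcal{G}$-module $R$-coring via $g\cdot h=\pi(g)h$ and its own coproduct and counit. *)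

From HB Require Import structures.
From mathcomp Require Import all_boot all_order all_algebra.
Set Implicit Arguments. Unset Strict Implicit. Unset Printing Implicit Defensive.
Import GRing.Theory.
Local Open Scope ring_scope.

(* Tensor products of abelian groups over a ring, presented by generators    *)
(* and relations.  An element of M (x)_R N is represented by a finite formal *)
(* sum (a sequence) of pairs (m, n); two representatives denote the same     *)
(* tensor iff they are related by the smallest congruence of the free        *)
(* commutative monoid on pairs generated by the bilinearity / balancing      *)
(* relators.  (The quotient is an abelian group, and is exactly M (x)_R N.)  *)

Inductive fcong (T : Type) (rel : seq T -> seq T -> Prop) : seq T -> seq T -> Prop :=
| fc_base a b : rel a b -> fcong rel a b
| fc_refl a : fcong rel a a
| fc_sym a b : fcong rel a b -> fcong rel b a
| fc_trans a b c : fcong rel a b -> fcong rel b c -> fcong rel a c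
| fc_cat a a' b b' : fcong rel a a' -> fcong rel b b' -> fcong rel (a ++ b) (a' ++ b')
| fc_swap a b : fcong rel (a ++ b) (b ++ a).

(* relators of a two-fold tensor product; [bal m n m' n'] means that the     *)
(* elementary tensors m (x) n and m' (x) n' are identified (balancing).      *)
Inductive tens2_rel (M N : zmodType) (bal : M -> N -> M -> N -> Prop) :
  seq (M * N) -> seq (M * N) -> Prop :=
| t2_addl m m' n : tens2_rel bal [:: (m + m', n)] [:: (m, n); (m', n)]
| t2_addr m n n' : tens2_rel bal [:: (m, n + n')] [:: (m, n); (m, n')]
| t2_zerol n : tens2_rel bal [:: (0, n)] [::]
| t2_zeror m : tens2_rel bal [:: (m, 0)] [::]
| t2_bal m n m' n' : bal m n m' n' -> tens2_rel bal [:: (m, n)] [:: (m', n')].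

Definition tens2_eq (M N : zmodType) (bal : M -> N -> M -> N -> Prop) :=
  fcong (tens2_rel bal).

(* balancing for M_R (x)_R _R N, with right action [ra] and left action [la]:*)
(*   (m . r) (x) n  =  m (x) (r . n)                                         *)
Definition balR (A : Type) (M N : zmodType) (ra : M -> A -> M) (la : A -> N -> N)
  (m : M) (n : N) (m' : M) (n' : N) : Prop :=
  exists r : A, m = ra m' r /\ n' = la r n.

Inductive tens3_rel (M N P : zmodType) (A : Type)
  (ra1 : M -> A -> M) (la2 : A -> N -> N) (ra2 : N -> A -> N) (la3 : A -> P -> P) :
  seq (M * N * P) -> seq (M * N * P) -> Prop :=
| t3_add1 m m' n p : tens3_rel ra1 la2 ra2 la3 [:: (m + m', n, p)] [:: (m, n, p); (m', n, p)]
| t3_add2 m n n' p : tens3_rel ra1 la2 ra2 la3 [:: (m, n + n', p)] [:: (m, n, p); (m, n', p)]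
| t3_add3 m n p p' : tens3_rel ra1 la2 ra2 la3 [:: (m, n, p + p')] [:: (m, n, p); (m, n, p')]
| t3_zero1 n p : tens3_rel ra1 la2 ra2 la3 [:: (0, n, p)] [::]
| t3_zero2 m p : tens3_rel ra1 la2 ra2 la3 [:: (m, 0, p)] [::]
| t3_zero3 m n : tens3_rel ra1 la2 ra2 la3 [:: (m, n, 0)] [::]
| t3_bal12 m n p r : tens3_rel ra1 la2 ra2 la3 [:: (ra1 m r, n, p)] [:: (m, la2 r n, p)]
| t3_bal23 m n p r : tens3_rel ra1 la2 ra2 la3 [:: (m, ra2 n r, p)] [:: (m, n, la3 r p)].

Definition tens3_eq (M N P : zmodType) (A : Type) ra1 la2 ra2 la3 :=
  fcong (@tens3_rel M N P A ra1 la2 ra2 la3).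

(* a map on representatives induces a bijection between the tensor products *)
(* with equivalences [eqA] and [eqB] (well defined, injective, surjective)   *)
Definition tens_bij (A B : Type) (eqA : seq A -> seq A -> Prop)
  (eqB : seq B -> seq B -> Prop) (f : seq A -> seq B) : Prop :=
  (forall u v, eqB (f u) (f v) <-> eqA u v) /\ (forall w, exists u, eqB (f u) w).

Section Bialgebroid.
Variables (k : comPzRingType) (R G : algType k).
Variables (s t : R -> G) (D : G -> seq (G * G)) (e : G -> R).

(* G_<| (x)_R _|>G :  g <| r = t(r) g,  r |> g = s(r) g *)
Definition teqG : seq (G * G) -> seq (G * G) -> Prop :=
  tens2_eq (balR (fun g r => t r * g) (fun r g => s r * g)).

Definition teqG3 : seq (G * G * G) -> seq (G * G * G) -> Prop :=
  tens3_eq (fun g r => t r * g) (fun r g => s r * g)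
           (fun g r => t r * g) (fun r g => s r * g).

(* G_<| (x)_R _|>G, source of the right Hopf map:  g <| r = g s(r) *)
Definition teqG_bl : seq (G * G) -> seq (G * G) -> Prop :=
  tens2_eq (balR (fun g r => g * s r) (fun r g => s r * g)).

Definition is_left_bialgebroid : Prop :=
  [/\ (forall (c : k) x y, s (c *: x + y) = c *: s x + s y),
      s 1 = 1 & (forall x y, s (x * y) = s x * s y)] /\
  [/\ (forall (c : k) x y, t (c *: x + y) = c *: t x + t y),
      t 1 = 1 & (forall x y, t (x * y) = t y * t x)] /\
  (forall r r', s r * t r' = t r' * s r) /\
  (forall (c : k) x y, teqG (D (c *: x + y))
      ([seq (c *: p.1, p.2) | p <- D x] ++ D y)) /\
  (forall r r' g, teqG (D (s r * t r' * g)) [seq (s r * p.1, t r' * p.2) | p <- D g]) /\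
  (forall g, teqG3 (flatten [seq [seq (q.1, q.2, p.2) | q <- D p.1] | p <- D g])
                   (flatten [seq [seq (p.1, q.1, q.2) | q <- D p.2] | p <- D g])) /\
  (forall g, \sum_(p <- D g) s (e p.1) * p.2 = g) /\
  (forall g, \sum_(p <- D g) t (e p.2) * p.1 = g) /\
  (* D takes values in the Takeuchi subspace *)
  (forall g r, teqG [seq (p.1 * t r, p.2) | p <- D g] [seq (p.1, p.2 * s r) | p <- D g]) /\
  (forall g g', teqG (D (g * g')) [seq (p.1 * q.1, p.2 * q.2) | p <- D g, q <- D g']) /\
  teqG (D 1) [:: (1, 1)] /\
  (forall (c : k) x y, e (c *: x + y) = c *: e x + e y) /\
  (forall r r' g, e (s r * t r' * g) = r * e g * r') /\
  e 1 = 1 /\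
  (forall g g', e (g * g') = e (g * s (e g')) /\ e (g * g') = e (g * t (e g'))).

Definition right_hopf_map (u : seq (G * G)) : seq (G * G) :=
  flatten [seq [seq (p.1 * q.2, p.2) | p <- D q.1] | q <- u].

Definition is_right_hopf_algebroid : Prop :=
  is_left_bialgebroid /\ tens_bij teqG_bl teqG right_hopf_map.

Definition flat_G_tri : Prop :=
  forall (N N' : lmodType R) (f : N -> N'),
    (forall (c : R) x y, f (c *: x + y) = c *: f x + f y) ->
    injective f ->
    forall u : seq (G * N),
      tens2_eq (balR (fun g r => t r * g) (fun r n => r *: n))
               [seq (p.1, f p.2) | p <- u] [::] ->
      tens2_eq (balR (fun g r => t r * g) (fun r n => r *: n)) u [::].

End Bialgebroid.

Section Surjection.
Variables (k : comPzRingType) (R G H : algType k).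
Variables (sG tG : R -> G) (DG : G -> seq (G * G)) (eG : G -> R).
Variables (sH tH : R -> H) (DH : H -> seq (H * H)) (eH : H -> R).
Variable (pi : G -> H).

Definition is_bialgebroid_surjection : Prop :=
  (forall (c : k) x y, pi (c *: x + y) = c *: pi x + pi y) /\
  pi 1 = 1 /\ (forall x y, pi (x * y) = pi x * pi y) /\
  (forall h, exists g, pi g = h) /\
  (forall r, pi (sG r) = sH r) /\ (forall r, pi (tG r) = tH r) /\
  (forall g, teqG sH tH (DH (pi g)) [seq (pi p.1, pi p.2) | p <- DG g]) /\
  (forall g, eH (pi g) = eG g).

Definition teqGH : seq (G * H) -> seq (G * H) -> Prop :=
  tens2_eq (balR (fun g r => tG r * g) (fun r h => sH r * h)).

Definition hopf_kernel (g : G) : Prop :=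
  teqGH [seq (p.1, pi p.2) | p <- DG g] [:: (g, 1)].

Definition hopf_kernel_plus (g : G) : Prop := hopf_kernel g /\ eG g = 0.

Definition in_GBplus (x : G) : Prop :=
  exists gs : seq (G * G),
    (forall p, p \in gs -> hopf_kernel_plus p.2) /\
    x = \sum_(p <- gs) p.1 * p.2.

Definition teqGBG : seq (G * G) -> seq (G * G) -> Prop :=
  tens2_eq (fun m n m' n' => exists b, hopf_kernel b /\ m = m' * b /\ n' = b * n).

Definition galois_map (u : seq (G * G)) : seq (G * H) :=
  flatten [seq [seq (p.1 * q.2, pi p.2) | p <- DG q.1] | q <- u].

Definition is_hopf_galois : Prop := tens_bij teqGBG teqGH galois_map.

(* Gbar = G / G B^+ is isomorphic to H as left G-module R-corings.  A map    *)
(* Gbar -> H is given by a map phi : G -> H vanishing on G B^+ (phi = phibar *)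
(* o wp); phibar is bijective iff phi is onto and phi x = phi y implies      *)
(* x - y in G B^+.                                                           *)
Definition Gbar_iso_H (phi : G -> H) : Prop :=
  (forall (c : k) x y, phi (c *: x + y) = c *: phi x + phi y) /\
  (forall x, in_GBplus x -> phi x = 0) /\
  (forall x y, phi x = phi y -> in_GBplus (x - y)) /\
  (forall h, exists g, phi g = h) /\
  (forall g x, phi (g * x) = pi g * phi x) /\
  (forall r r' x, phi (sG r * tG r' * x) = sH r * tH r' * phi x) /\
  (forall g, teqG sH tH (DH (phi g)) [seq (phi p.1, phi p.2) | p <- DG g]) /\
  (forall g, eH (phi g) = eG g).

End Surjection.

From HB Require Import structures.
From mathcomp Require Import all_boot all_order all_algebra.
Set Implicit Arguments. Unset Strict Implicit. Unset Printing Implicit Defensive.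
Import GRing.Theory.
Local Open Scope ring_scope.

(* The induced map is pi itself, and all the required structure except the
   comparison of kernels is carried by pi.  It kills G B^+: applying the
   balanced map g (x) h |-> s(e g) h to the Hopf-kernel identity
   b(1) (x) pi(b(2)) = b (x) 1 gives pi b = s(e b), which is 0 on B^+.
   Conversely, ker pi is contained in G B^+ either by assumption or by the
   Hopf-Galois property: for x in ker pi choose u with right Hopf image 1 (x) x;
   the Galois map sends u to 1 (x) pi x = 0, so u = 0 in G (x)_B G.  The map
   g (x)_B g' |-> g s(e g') into G / G B^+ is well defined, because
   b s(e g') - s(e (b g')) = c - s(e c) lies in B^+ for c = b s(e g'), and it
   sends u to x. *)

Lemma fcong_hom (A B : Type) (rel : seq A -> seq A -> Prop)
    (rel' : seq B -> seq B -> Prop) (F : seq A -> seq B) :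
  (forall a b, fcong rel' (F (a ++ b)) (F a ++ F b)) ->
  (forall a b, rel a b -> fcong rel' (F a) (F b)) ->
  forall a b, fcong rel a b -> fcong rel' (F a) (F b).
Proof.
move=> Fcat Frel a b; elim=> {a b} [a b /Frel //|a|a b _|a b c _ + _|a a' b b' _ + _|a b].
- exact: fc_refl.
- exact: fc_sym.
- exact: fc_trans.
- move=> Fa Fb; apply: fc_trans (Fcat _ _) _; apply: fc_trans _ (fc_sym (Fcat _ _)).
  exact: fc_cat.
- apply: fc_trans (Fcat _ _) _; exact: fc_trans (fc_swap _ _ _) (fc_sym (Fcat _ _)).
Qed.

Lemma fcong_map (A B : Type) (rel : seq A -> seq A -> Prop)
    (rel' : seq B -> seq B -> Prop) (f : A -> B) :
  (forall a b, rel a b -> fcong rel' (map f a) (map f b)) ->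
  forall a b, fcong rel a b -> fcong rel' (map f a) (map f b).
Proof. by apply: fcong_hom => a b; rewrite map_cat; apply: fc_refl. Qed.

Lemma fcong_perm (T : eqType) (rel : seq T -> seq T -> Prop) (a b : seq T) :
  perm_eq a b -> fcong rel a b.
Proof.
elim: a b => [|x a IHa] b; first by rewrite perm_sym => /perm_nilP ->; apply: fc_refl.
move=> perm_xa_b; have : x \in b by rewrite -(perm_mem perm_xa_b) mem_head.
move: perm_xa_b => /[swap] /splitPr [b1 b2] perm_xa_b.
have /IHa perm_a : perm_eq a (b1 ++ b2).
  by rewrite -(perm_cons x) (permPl perm_xa_b) -(cat1s x b2) perm_catCA.
rewrite -cat1s -(cat1s x b2) catA.
apply: fc_trans (fc_cat (fc_refl _ _) perm_a) _; rewrite catA.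
by apply: fc_cat; [apply: fc_swap | apply: fc_refl].
Qed.

Lemma fcong_map_nil (A B : Type) (rel : seq B -> seq B -> Prop) (f : A -> B) :
  (forall x, fcong rel [:: f x] [::]) -> forall a, fcong rel (map f a) [::].
Proof.
move=> fx_nil; elim=> [|x a IHa]; first exact: fc_refl.
exact: fc_cat (fx_nil x) IHa.
Qed.

Lemma fcong_map_split (A : Type) (T : eqType) (rel : seq T -> seq T -> Prop) (f g h : A -> T) :
  (forall x, fcong rel [:: f x] [:: g x; h x]) ->
  forall a, fcong rel (map f a) (map g a ++ map h a).
Proof.
move=> fx_split; elim=> [|x a IHa]; first exact: fc_refl.
rewrite /= -cat1s; apply: fc_trans (fc_cat (fx_split x) IHa) _; apply: fcong_perm.
by rewrite /= perm_cons -cat1s perm_catCA.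
Qed.

Lemma fcong_sum_mod (A : Type) (V : zmodType) (P : V -> Prop)
    (rel : seq A -> seq A -> Prop) (F : A -> V) :
  P 0 -> (forall x y, P x -> P y -> P (x - y)) ->
  (forall a b, rel a b -> P (\sum_(x <- a) F x - \sum_(x <- b) F x)) ->
  forall a b, fcong rel a b -> P (\sum_(x <- a) F x - \sum_(x <- b) F x).
Proof.
move=> P0 PB Prel; have PN x : P x -> P (- x) by rewrite -sub0r; apply: PB.
have PD x y : P x -> P y -> P (x + y) by move=> Px /PN Py; rewrite -[y]opprK; apply: PB.
move=> a b; elim=> {a b} [a b /Prel //|a|a b _ /PN|a b c _ Pab _ Pbc|a a' b b' _ Pa _ Pb|a b].
- by rewrite subrr.
- by rewrite opprB.
- by rewrite -[_ - _](subrKA (\sum_(x <- b) F x)); apply: PD.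
- by rewrite !big_cat opprD addrACA; apply: PD.
- by rewrite !big_cat [X in _ - X]addrC subrr.
Qed.

Section AdditiveMaps.
Variables (V W : zmodType) (f : V -> W).
Hypothesis fD : {morph f : x y / x + y}.

Lemma add_morph0 : f 0 = 0.
Proof. by apply: (addrI (f 0)); rewrite -fD !addr0. Qed.

Lemma add_morphN x : f (- x) = - f x.
Proof. by apply: (addrI (f x)); rewrite -fD !subrr add_morph0. Qed.

Lemma add_morphB x y : f (x - y) = f x - f y.
Proof. by rewrite fD add_morphN. Qed.

Lemma add_morph_sum (I : Type) (r : seq I) (F : I -> V) :
  f (\sum_(i <- r) F i) = \sum_(i <- r) f (F i).
Proof. exact: (big_morph f fD add_morph0). Qed.

End AdditiveMaps.

Lemma klin_morphD (k : pzRingType) (V W : lmodType k) (f : V -> W) :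
  (forall (c : k) x y, f (c *: x + y) = c *: f x + f y) -> {morph f : x y / x + y}.
Proof. by move=> f_lin x y; have := f_lin 1 x y; rewrite !scale1r. Qed.

Section TensorSquare.
Variables (M N : zmodType) (bal : M -> N -> M -> N -> Prop).

Lemma tens2_eq_map (M' N' : zmodType) (bal' : M' -> N' -> M' -> N' -> Prop)
    (f : M -> M') (g : N -> N') :
  {morph f : x y / x + y} -> {morph g : x y / x + y} ->
  (forall m n m' n', bal m n m' n' -> bal' (f m) (g n) (f m') (g n')) ->
  forall a b, tens2_eq bal a b ->
    tens2_eq bal' [seq (f p.1, g p.2) | p <- a] [seq (f p.1, g p.2) | p <- b].
Proof.
move=> fD gD fg_bal; apply: fcong_map => a b rel; apply: fc_base.
case: rel => [m m' n|m n n'|n|m|m n m' n' /fg_bal]; rewrite /= ?fD ?gD.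
- exact: t2_addl.
- exact: t2_addr.
- rewrite (add_morph0 fD); exact: t2_zerol.
- rewrite (add_morph0 gD); exact: t2_zeror.
- exact: t2_bal.
Qed.

Lemma tens2_eq_sum_mod (V : zmodType) (P : V -> Prop) (F : M -> N -> V) :
  P 0 -> (forall x y, P x -> P y -> P (x - y)) ->
  (forall n, {morph F^~ n : x y / x + y}) -> (forall m, {morph F m : x y / x + y}) ->
  (forall m n m' n', bal m n m' n' -> P (F m n - F m' n')) ->
  forall a b, tens2_eq bal a b ->
    P (\sum_(p <- a) F p.1 p.2 - \sum_(p <- b) F p.1 p.2).
Proof.
move=> P0 PB FDl FDr F_bal; apply: fcong_sum_mod => // a b rel.
case: rel => [m m' n|m n n'|n|m|m n m' n' /F_bal]; rewrite !big_cons !big_nil /= ?addr0 //.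
- by rewrite FDl subrr.
- by rewrite FDr subrr.
- by rewrite (add_morph0 (FDl n)) subrr.
- by rewrite (add_morph0 (FDr m)) subrr.
Qed.

Lemma tens2_eq_sum (V : zmodType) (F : M -> N -> V) :
  (forall n, {morph F^~ n : x y / x + y}) -> (forall m, {morph F m : x y / x + y}) ->
  (forall m n m' n', bal m n m' n' -> F m n = F m' n') ->
  forall a b, tens2_eq bal a b -> \sum_(p <- a) F p.1 p.2 = \sum_(p <- b) F p.1 p.2.
Proof.
move=> FDl FDr F_bal a b ab; apply/subr0_eq.
by apply: (tens2_eq_sum_mod (P := eq^~ 0)) ab => // [x y -> ->|m n m' n' /F_bal ->];
  rewrite subrr.
Qed.

End TensorSquare.

Section LeftBialgebroid.
Variables (k : comPzRingType) (R G : algType k).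
Variables (s t : R -> G) (D : G -> seq (G * G)) (e : G -> R).
Hypothesis hB : is_left_bialgebroid s t D e.

Lemma srcD : {morph s : x y / x + y}.
Proof. by case: hB => -[/klin_morphD]. Qed.

Lemma src1 : s 1 = 1. Proof. by case: hB => -[]. Qed.

Lemma srcM : {morph s : x y / x * y}. Proof. by case: hB => -[]. Qed.

Lemma tgt1 : t 1 = 1. Proof. by case: hB => _ [[]]. Qed.

Lemma src_tgt_comm r r' : s r * t r' = t r' * s r.
Proof. by case: hB => _ [_ []]. Qed.

Lemma coprod_lin (c : k) x y :
  teqG s t (D (c *: x + y)) ([seq (c *: p.1, p.2) | p <- D x] ++ D y).
Proof. by case: hB => _ [_ [_ []]]. Qed.

Lemma coprod_bimod r r' g :
  teqG s t (D (s r * t r' * g)) [seq (s r * p.1, t r' * p.2) | p <- D g].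
Proof. by case: hB => _ [_ [_ [_ []]]]. Qed.

Lemma counitl g : \sum_(p <- D g) s (e p.1) * p.2 = g.
Proof. by case: hB => _ [_ [_ [_ [_ [_ []]]]]]. Qed.

Lemma coprod_takeuchi g r :
  teqG s t [seq (p.1 * t r, p.2) | p <- D g] [seq (p.1, p.2 * s r) | p <- D g].
Proof. by case: hB => _ [_ [_ [_ [_ [_ [_ [_ []]]]]]]]. Qed.

Lemma coprodM g g' :
  teqG s t (D (g * g')) [seq (p.1 * q.1, p.2 * q.2) | p <- D g, q <- D g'].
Proof. by case: hB => _ [_ [_ [_ [_ [_ [_ [_ [_ []]]]]]]]]. Qed.

Lemma coprod1 : teqG s t (D 1) [:: (1, 1)].
Proof. by case: hB => _ [_ [_ [_ [_ [_ [_ [_ [_ [_ []]]]]]]]]]. Qed.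

Lemma counitD : {morph e : x y / x + y}.
Proof. by case: hB => _ [_ [_ [_ [_ [_ [_ [_ [_ [_ [_ [/klin_morphD]]]]]]]]]]]. Qed.

Lemma counit_bimod r r' g : e (s r * t r' * g) = r * e g * r'.
Proof. by case: hB => _ [_ [_ [_ [_ [_ [_ [_ [_ [_ [_ [_ []]]]]]]]]]]]. Qed.

Lemma counit1 : e 1 = 1.
Proof. by case: hB => _ [_ [_ [_ [_ [_ [_ [_ [_ [_ [_ [_ [_ []]]]]]]]]]]]]. Qed.

Lemma counitM g g' : e (g * g') = e (g * s (e g')).
Proof. by case: hB => _ [_ [_ [_ [_ [_ [_ [_ [_ [_ [_ [_ [_ [_ /(_ g g') []]]]]]]]]]]]]]. Qed.

Lemma counit_tgtM r g : e (t r * g) = e g * r.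
Proof. by have := counit_bimod 1 r g; rewrite src1 !mul1r. Qed.

Lemma counit_src r : e (s r) = r.
Proof. by have := counit_bimod r 1 1; rewrite tgt1 !mulr1 counit1 mulr1. Qed.

Lemma teqG_mulr x y a b : teqG s t a b ->
  teqG s t [seq (p.1 * x, p.2 * y) | p <- a] [seq (p.1 * x, p.2 * y) | p <- b].
Proof.
apply: (tens2_eq_map (f := *%R^~ x) (g := *%R^~ y)) => [u v|u v|m n m' n' [r [-> ->]]];
  rewrite /= ?mulrDl //.
by exists r; rewrite !mulrA.
Qed.

Lemma teqG_srcMl r a b : teqG s t a b ->
  teqG s t [seq (s r * p.1, p.2) | p <- a] [seq (s r * p.1, p.2) | p <- b].
Proof.
apply: (tens2_eq_map (f := *%R (s r)) (g := id)) => [u v|//|m n m' n' [r' [-> ->]]];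
  rewrite /= ?mulrDr //.
by exists r'; rewrite !mulrA src_tgt_comm.
Qed.

Lemma coprod_src r : teqG s t (D (s r)) [:: (s r, 1)].
Proof.
have := coprod_bimod r 1 1; rewrite tgt1 !mulr1 => coprod_sr; apply: fc_trans coprod_sr _.
under eq_map do rewrite mul1r.
by have := teqG_srcMl r coprod1; rewrite /= mulr1.
Qed.

Lemma teqG_takeuchiMr (P : seq (G * G)) :
  (forall r, teqG s t [seq (p.1 * t r, p.2) | p <- P] [seq (p.1, p.2 * s r) | p <- P]) ->
  forall Q Q', teqG s t Q Q' ->
  teqG s t [seq (p.1 * q.1, p.2 * q.2) | p <- P, q <- Q]
           [seq (p.1 * q.1, p.2 * q.2) | p <- P, q <- Q'].
Proof.
move=> P_takeuchi; apply: fcong_hom => [Q Q'|Q Q' rel].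
  exact/fcong_perm/permPl/perm_allpairs_catr.
have split2 x y : teqG s t [seq (p.1 * q.1, p.2 * q.2) | p <- P, q <- [:: x; y]]
    ([seq (p.1 * q.1, p.2 * q.2) | p <- P, q <- [:: x]] ++
     [seq (p.1 * q.1, p.2 * q.2) | p <- P, q <- [:: y]]).
  exact/fcong_perm/permPl/(perm_allpairs_catr _ _ (fun=> [:: x]) (fun=> [:: y])).
case: rel => [m m' n|m n n'|n|m|m n m' n' [r [-> ->]]].
- apply: fc_trans _ (fc_sym (split2 _ _)); rewrite !allpairs1r.
  by apply: fcong_map_split => p; apply: fc_base; rewrite /= mulrDr; apply: t2_addl.
- apply: fc_trans _ (fc_sym (split2 _ _)); rewrite !allpairs1r.
  by apply: fcong_map_split => p; apply: fc_base; rewrite /= mulrDr; apply: t2_addr.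
- rewrite allpairs1r allpairs0r; apply: fcong_map_nil => p.
  by apply: fc_base; rewrite /= mulr0; apply: t2_zerol.
- rewrite allpairs1r allpairs0r; apply: fcong_map_nil => p.
  by apply: fc_base; rewrite /= mulr0; apply: t2_zeror.
- rewrite !allpairs1r.
  rewrite [X in fcong _ X _](eq_map (g := (fun p => (p.1 * m', p.2 * n)) \o
    (fun p => (p.1 * t r, p.2)))) => [|p]; last by rewrite /= mulrA.
  rewrite [X in fcong _ _ X](eq_map (g := (fun p => (p.1 * m', p.2 * n)) \o
    (fun p => (p.1, p.2 * s r)))) => [|p]; last by rewrite /= mulrA.
  by rewrite !map_comp; apply: teqG_mulr.
Qed.

Lemma coprodMsrc g r : teqG s t (D (g * s r)) [seq (p.1 * s r, p.2) | p <- D g].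
Proof.
apply: fc_trans (coprodM g (s r)) _.
apply: fc_trans (teqG_takeuchiMr (coprod_takeuchi g) (coprod_src r)) _.
by rewrite allpairs1r; under eq_map do rewrite mulr1; apply: fc_refl.
Qed.

Lemma counit_teq (A : pzRingType) (sigma : R -> A) :
  {morph sigma : x y / x + y} -> {morph sigma : x y / x * y} ->
  forall a b, tens2_eq (balR (fun g r => t r * g) (fun r x => sigma r * x)) a b ->
    \sum_(p <- a) sigma (e p.1) * p.2 = \sum_(p <- b) sigma (e p.1) * p.2.
Proof.
move=> sigmaD sigmaM; apply: (tens2_eq_sum (F := fun g x => sigma (e g) * x)).
- by move=> x g g'; rewrite /= counitD sigmaD mulrDl.
- by move=> g x x'; rewrite mulrDr.
- by move=> m n m' n' [r [-> ->]]; rewrite counit_tgtM sigmaM mulrA.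
Qed.

Lemma counit_right_hopf_map u :
  \sum_(p <- right_hopf_map D u) s (e p.1) * p.2 = \sum_(q <- u) q.1 * s (e q.2).
Proof.
rewrite big_flatten /= big_map; apply: eq_bigr => q _; rewrite big_map.
under eq_bigr do rewrite counitM.
rewrite -[RHS]counitl (counit_teq srcD srcM (coprodMsrc q.1 (e q.2))).
by rewrite big_map.
Qed.

End LeftBialgebroid.

Section HopfKernel.
Variables (k : comPzRingType) (R G H : algType k).
Variables (sG tG : R -> G) (DG : G -> seq (G * G)) (eG : G -> R).
Variables (sH tH : R -> H) (DH : H -> seq (H * H)) (eH : H -> R).
Variable pi : G -> H.
Hypothesis hG : is_left_bialgebroid sG tG DG eG.
Hypothesis hH : is_left_bialgebroid sH tH DH eH.
Hypothesis hpi : is_bialgebroid_surjection sG tG DG eG sH tH DH eH pi.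

Local Notation B := (hopf_kernel tG DG sH pi).
Local Notation Bplus := (hopf_kernel_plus tG DG eG sH pi).
Local Notation GBplus := (in_GBplus tG DG eG sH pi).

Lemma piD : {morph pi : x y / x + y}.
Proof. by case: hpi => /klin_morphD. Qed.

Lemma pi1 : pi 1 = 1. Proof. by case: hpi => _ []. Qed.

Lemma piM : {morph pi : x y / x * y}. Proof. by case: hpi => _ [_ []]. Qed.

Lemma pi_src r : pi (sG r) = sH r. Proof. by case: hpi => _ [_ [_ [_ []]]]. Qed.

Lemma teqGH_mapl (f : G -> G) : {morph f : x y / x + y} ->
  (forall r g, f (tG r * g) = tG r * f g) ->
  forall a b, teqGH tG sH a b ->
    teqGH tG sH [seq (f p.1, p.2) | p <- a] [seq (f p.1, p.2) | p <- b].
Proof.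
move=> fD f_tgt; apply: (tens2_eq_map (f := f) (g := id)) => // m n m' n' [r [-> ->]].
by exists r; rewrite f_tgt.
Qed.

Lemma teqGH_of_teqG a b : teqG sG tG a b ->
  teqGH tG sH [seq (p.1, pi p.2) | p <- a] [seq (p.1, pi p.2) | p <- b].
Proof.
apply: (tens2_eq_map (f := id) (g := pi)) => // [|m n m' n' [r [-> ->]]]; first exact: piD.
by exists r; rewrite piM pi_src.
Qed.

Lemma hopf_kernelB x y : B x -> B y -> B (x - y).
Proof.
move=> Bx By; rewrite /hopf_kernel -scaleN1r addrC.
apply: fc_trans (teqGH_of_teqG (coprod_lin hG _ _ _)) _; rewrite map_cat -map_comp.
under eq_map do rewrite /= scaleN1r.
have Bny := teqGH_mapl (@opprD G) (fun r g => esym (mulrN _ _)) By.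
rewrite -map_comp /= in Bny; apply: fc_trans (fc_cat Bny Bx) _.
by rewrite scaleN1r; apply: fc_sym; apply: fc_base; apply: t2_addl.
Qed.

Lemma hopf_kernel_src r : B (sG r).
Proof. by have := teqGH_of_teqG (coprod_src hG r); rewrite /= pi1. Qed.

Lemma hopf_kernelMsrc b r : B b -> B (b * sG r).
Proof.
move=> Bb; rewrite /hopf_kernel.
apply: fc_trans (teqGH_of_teqG (coprodMsrc hG b r)) _; rewrite -map_comp.
have := teqGH_mapl (f := *%R^~ (sG r)) (fun x y => mulrDl x y _)
  (fun r' g => esym (mulrA _ _ _)) Bb.
by rewrite -map_comp.
Qed.

Lemma hopf_kernel_plus_ker b : Bplus b -> pi b = 0.
Proof.
move=> [Bb eb0]; have := counit_teq hG (srcD hH) (srcM hH) Bb.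
rewrite big_cons big_nil /= eb0 (add_morph0 (srcD hH)) mul0r addr0 big_map => <-.
rewrite -{1}(counitl hG b) (add_morph_sum piD); apply: eq_bigr => p _.
by rewrite piM pi_src.
Qed.

Lemma hopf_kernel_sub_counit b : B b -> Bplus (b - sG (eG b)).
Proof.
move=> Bb; split; first exact: hopf_kernelB Bb (hopf_kernel_src _).
by rewrite (add_morphB (counitD hG)) (counit_src hG) subrr.
Qed.

Lemma GBplus0 : GBplus 0.
Proof. by exists [::]; rewrite big_nil. Qed.

Lemma GBplusB x y : GBplus x -> GBplus y -> GBplus (x - y).
Proof.
move=> [gs [gs_Bplus ->]] [gs' [gs'_Bplus ->]].
exists (gs ++ [seq (- p.1, p.2) | p <- gs']); split.
  by move=> p; rewrite mem_cat => /orP [/gs_Bplus //|/mapP [q /gs'_Bplus Bq ->]].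
rewrite big_cat big_map -sumrN; congr (_ + _); apply: eq_bigr => p _.
by rewrite mulNr.
Qed.

Lemma GBplusM g b : Bplus b -> GBplus (g * b).
Proof.
move=> Bb; exists [:: (g, b)]; split=> [p|]; last by rewrite big_seq1.
by rewrite inE => /eqP ->.
Qed.

Lemma GBplus_ker x : GBplus x -> pi x = 0.
Proof.
move=> [gs [gs_Bplus ->]]; rewrite (add_morph_sum piD) big_seq big1 // => p /gs_Bplus Bp.
by rewrite piM (hopf_kernel_plus_ker Bp) mulr0.
Qed.

Lemma teqGBG_counit_GBplus u :
  teqGBG tG DG sH pi u [::] -> GBplus (\sum_(q <- u) q.1 * sG (eG q.2)).
Proof.
move=> u0.
have := tens2_eq_sum_mod (F := fun g g' => g * sG (eG g')) GBplus0 GBplusB _ _ _ u0.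
rewrite big_nil subr0; apply=> [g' g x|g g' g''|m n m' n' [b [Bb [-> ->]]]].
- by rewrite mulrDl.
- by rewrite (counitD hG) (srcD hG) mulrDr.
rewrite (counitM hG b) -mulrA -mulrBr; apply: GBplusM.
exact/hopf_kernel_sub_counit/hopf_kernelMsrc.
Qed.

Lemma galois_mapE u :
  galois_map DG pi u = [seq (p.1, pi p.2) | p <- right_hopf_map DG u].
Proof.
rewrite /galois_map /right_hopf_map map_flatten -map_comp; congr flatten.
by apply: eq_map => q; rewrite /= -map_comp.
Qed.

Lemma hopf_galois_ker_GBplus :
  (forall w, exists u, teqG sG tG (right_hopf_map DG u) w) ->
  is_hopf_galois tG DG sH pi -> forall x, pi x = 0 -> GBplus x.
Proof.
move=> rhm_onto [galois_inj _] x pix0; have [u u_1x] := rhm_onto [:: (1, x)].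
have u0 : teqGBG tG DG sH pi u [::].
  apply/(galois_inj u [::]); rewrite galois_mapE.
  apply: fc_trans (teqGH_of_teqG u_1x) _; rewrite /= pix0.
  by apply: fc_base; apply: t2_zeror.
have := teqGBG_counit_GBplus u0.
rewrite -(counit_right_hopf_map hG) (counit_teq hG (srcD hG) (srcM hG) u_1x).
by rewrite big_seq1 /= (counit1 hG) (src1 hG) mul1r.
Qed.

End HopfKernel.

Unset Implicit Arguments.

Theorem corollary4p12 (k : comPzRingType) (R G H : algType k)
  (sG tG : R -> G) (DG : G -> seq (G * G)) (eG : G -> R)
  (sH tH : R -> H) (DH : H -> seq (H * H)) (eH : H -> R)
  (pi : G -> H) :
  is_right_hopf_algebroid sG tG DG eG ->
  is_right_hopf_algebroid sH tH DH eH ->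
  is_bialgebroid_surjection sG tG DG eG sH tH DH eH pi ->
  flat_G_tri tG ->
  ((forall x, pi x = 0 <-> in_GBplus tG DG eG sH pi x) \/
   is_hopf_galois tG DG sH pi) ->
  exists phi : G -> H, Gbar_iso_H sG tG DG eG sH tH DH eH pi phi.
Proof.
move=> [hG [_ rhm_onto]] [hH _] hpi _ ker_GBplus.
have ker_sub x : pi x = 0 -> in_GBplus tG DG eG sH pi x.
  case: ker_GBplus => [/(_ x) [] // | galois].
  exact: hopf_galois_ker_GBplus hG hpi rhm_onto galois x.
have [pi_lin [_ [_ [pi_onto [_ [pi_tgt [pi_coprod pi_counit]]]]]]] := hpi.
exists pi; split; first exact: pi_lin.
split; first exact: GBplus_ker hG hH hpi.
split; first by move=> x y pixy; apply: ker_sub; rewrite (add_morphB (piD hpi)) pixy subrr.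
split; first exact: pi_onto.
split; first exact: piM hpi.
split; first by move=> r r' x; rewrite !(piM hpi) (pi_src hpi) pi_tgt.
by split.
Qed.
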